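(* There is an absolute constant $c>0$ such that the following holds. For any $N,T\ge1$, suppose the interference graph on the $N$ individuals has no edges. Then for any (possibly adaptive) design and any estimator $\widehat\Delta$ (a function of the observed treatments $W$ and outcomes $Y$), there exists an instance of the model (satisfying the model assumptions, with the edgeless interference graph) under which $\mathbb E[(\widehat\Delta-\Delta)^2]\ge c/(NT)$; that is, ${\rm MSE}(\widehat\Delta)=\Omega(1/(NT))$.
   Context: Model. There are $N$ individuals $U$ ($|U|=N$) and $T$ rounds $[T]=\{1,\dots,T\}$; with an edgeless interference graph each individual's neighborhood is $\mathcal N(i)=\{i\}$. Treatments $W\in\{0,1\}^{N\times T}$ are assigned by a design (here possibly adaptive, i.e., treatments may depend on previously observed data). Each individual has a state $S_{it}$ in a state space $\mathcal S$ evolving as a Markov chain with kernel $P^{W_{it}}_{it}$ depending on its own treatment; outcomes are $Y_{it}=\mu_{it}(S_{it},W_{it})+\epsilon_{it}$ with $\mu_{it}\in[0,1]$ and mean-zero noise with $\mathbb E[\epsilon_{it}\epsilon_{i't'}\mid S,W]$ bounded by $\sigma^2\mathbbm 1(i=i',t=t')$; the kernels satisfy a rapid-mixing contraction $d_{\rm TV}(fP,f'P)\le e^{-1/t_{\rm mix}}d_{\rm TV}(f,f')$. Only $W$ and $Y$ are observed. The estimand is the global average treatment effect $\Delta=\frac1{NT}\sum_{(i,t)}\big(\mathbb E[Y_{it}\mid W=\mathbf 1]-\mathbb E[Y_{it}\mid W=\mathbf 0]\big)$. *)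

From HB Require Import structures.
From Stdlib Require Import Reals.
From mathcomp Require Import all_boot all_order all_algebra.
From mathcomp Require Import Rstruct.

Import Order.TTheory GRing.Theory Num.Theory.
Local Open Scope ring_scope.

Notation R := Rdefinitions.R.

(* Rounds are 0-indexed here (round t+1 of the paper is t : 'I_T).          *)
Definition cell (N T : nat) := ('I_N * 'I_T)%type.

Definition tmat (N T : nat) := {ffun cell N T -> bool}.
Definition omat (N T : nat) := cell N T -> R.

Definition row_at {N T : nat} (W : tmat N T) (t : 'I_T) : {ffun 'I_N -> bool} :=
  [ffun i => W (i, t)].

(* the round preceding t (irrelevant when t = 0) *)
Definition prev_round {T : nat} (t : 'I_T) : 'I_T := insubd t (val t).-1.

Definition is_distr {A : finType} (p : A -> R) : Prop :=
  (forall a, 0 <= p a) /\ \sum_(a : A) p a = 1.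

(* Designs (possibly adaptive and randomized).  At round t, the treatment    *)
(* vector (W_{1t},...,W_{Nt}) is drawn from dprob t W Y, a distribution on   *)
(* {0,1}^N which may depend on the treatments and outcomes observed in the   *)
(* previous rounds (and only on those: non-anticipation).                    *)
Record design (N T : nat) := Design {
  dprob : 'I_T -> tmat N T -> omat N T -> {ffun 'I_N -> bool} -> R }.
Arguments dprob {N T}.

Definition valid_design {N T : nat} (d : design N T) : Prop :=
  (forall t W Y, is_distr (dprob d t W Y)) /\
  (forall (t : 'I_T) (W W' : tmat N T) (Y Y' : omat N T),
     (forall (i : 'I_N) (s : 'I_T), (val s < val t)%N ->
        W (i, s) = W' (i, s) /\ Y (i, s) = Y' (i, s)) ->
     dprob d t W Y = dprob d t W' Y').

Definition const_design {N T : nat} (w : bool) : design N T :=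
  @Design N T (fun _ _ _ v => if v == [ffun => w] then 1 else 0).

Definition estimator (N T : nat) := tmat N T -> omat N T -> R.

(* Instances of the model with the edgeless interference graph             *)
(* (neighbourhood of i is {i}): individual i's state evolves by its own      *)
(* kernel driven by its own treatment only.                                  *)
(*   S_{i,0} ~ init i,  S_{i,t+1} ~ kern i t W_{it} S_{it} (.),             *)
(*   Y_{it} = mu i t S_{it} W_{it} + eps_{it},                              *)
(* with eps_{it} drawn (given S, W, independently over cells) from a finitely *)
(* supported law nlaw i t S_{it} W_{it} on noise labels, with value nval.    *)
Record instance (N T : nat) := Instance {
  St : finType;
  init : 'I_N -> St -> R;
  kern : 'I_N -> 'I_T -> bool -> St -> St -> R;
  mu : 'I_N -> 'I_T -> St -> bool -> R;
  Ns : finType;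
  nlaw : 'I_N -> 'I_T -> St -> bool -> Ns -> R;
  nval : 'I_N -> 'I_T -> St -> bool -> Ns -> R }.
Arguments St {N T}. Arguments init {N T}. Arguments kern {N T}. Arguments mu {N T}.
Arguments Ns {N T}. Arguments nlaw {N T}. Arguments nval {N T}.

Definition push {S : finType} (P : S -> S -> R) (f : S -> R) : S -> R :=
  fun s' => \sum_(s : S) f s * P s s'.

Definition dTV {S : finType} (f g : S -> R) : R :=
  2^-1 * \sum_(s : S) `|f s - g s|.

Definition model_ok (sigma tmix : R) {N T : nat} (I : instance N T) : Prop :=
  (forall i, is_distr (init I i)) /\
  (forall i t w s, is_distr (kern I i t w s)) /\
  (forall i t s w, 0 <= mu I i t s w <= 1) /\
  (forall i t s w, is_distr (nlaw I i t s w)) /\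
  (forall i t s w, \sum_(e : Ns I) nlaw I i t s w e * nval I i t s w e = 0) /\
  (forall i t s w,
      \sum_(e : Ns I) nlaw I i t s w e * (nval I i t s w e) ^+ 2 <= sigma ^+ 2) /\
  (forall i t w (f g : St I -> R), is_distr f -> is_distr g ->
      dTV (push (kern I i t w) f) (push (kern I i t w) g)
        <= exp (- 1 / tmix) * dTV f g).

Definition outcome {N T : nat} (I : instance N T) (W : tmat N T)
  (S : {ffun cell N T -> St I}) (E : {ffun cell N T -> Ns I}) : omat N T :=
  fun c => mu I c.1 c.2 (S c) (W c) + nval I c.1 c.2 (S c) (W c) (E c).

Definition traj_prob {N T : nat} (I : instance N T) (d : design N T) (W : tmat N T)
  (S : {ffun cell N T -> St I}) (E : {ffun cell N T -> Ns I}) : R :=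
  let Y := outcome I W S E in
  \prod_(t : 'I_T)
    (dprob d t W Y (row_at W t) *
     \prod_(i : 'I_N)
       ((if val t is 0 then init I i (S (i, t))
         else kern I i (prev_round t) (W (i, prev_round t))
                (S (i, prev_round t)) (S (i, t))) *
        nlaw I i t (S (i, t)) (W (i, t)) (E (i, t)))).

Definition expect {N T : nat} (I : instance N T) (d : design N T)
  (F : tmat N T -> omat N T -> R) : R :=
  \sum_(W : tmat N T) \sum_(S : {ffun cell N T -> St I})
    \sum_(E : {ffun cell N T -> Ns I})
      traj_prob I d W S E * F W (outcome I W S E).

Definition gate {N T : nat} (I : instance N T) : R :=
  (N%:R * T%:R)^-1 * \sum_(c : cell N T)
    (expect I (@const_design N T true) (fun _ Y => Y c)
     - expect I (@const_design N T false) (fun _ Y => Y c)).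

Definition MSE {N T : nat} (I : instance N T) (d : design N T) (est : estimator N T) : R :=
  expect I d (fun W Y => (est W Y - gate I) ^+ 2).

(* A Bayesian lower bound.  Take two states, outcome mean [1] when the state equals the
   treatment and [0] otherwise, and no noise; the state of each cell (i, t) is drawn afresh
   from [q θ_c], which puts mass 3/4 on the bit θ_c, so the kernels forget the past and
   mix instantly.  The treatment effect of cell c is +1/2 or -1/2 according to θ_c.  The
   data reveal the states and nothing more about θ; under the uniform prior on θ the θ_c
   are independent a posteriori with P(θ_c = S_c) = 3/4, so whatever the design and the
   estimator, the Bayes risk is at least the posterior variance of Δ, which is
   NT · (3/16) / (NT)^2.  Some θ does at least as badly as the average. *)

From Stdlib Require Import Reals FunctionalExtensionality.
From mathcomp Require Import all_boot all_order all_algebra.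
From mathcomp Require Import Rstruct.
From mathcomp Require Import ring lra.
Import Order.TTheory GRing.Theory Num.Theory.
Local Open Scope ring_scope.

Section ProductWeights.
Variables (I B : finType) (r : I -> B -> R).
Hypothesis r_sum1 : forall i, \sum_b r i b = 1.

Definition prodw (x : {ffun I -> B}) : R := \prod_i r i (x i).

Lemma sum_prodw_prod (G : I -> B -> R) :
  \sum_x prodw x * \prod_i G i (x i) = \prod_i \sum_b r i b * G i b.
Proof.
rewrite bigA_distr_bigA /=; apply: eq_bigr => x _.
by rewrite /prodw -big_split.
Qed.

Lemma sum_prodw_prod_cond (P : pred I) (G : I -> B -> R) :
  \sum_x prodw x * \prod_(i | P i) G i (x i) = \prod_(i | P i) \sum_b r i b * G i b.
Proof.
have -> : \sum_x prodw x * \prod_(i | P i) G i (x i) =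
          \sum_x prodw x * \prod_i (if P i then G i (x i) else 1).
  by apply: eq_bigr => x _; rewrite big_mkcond.
rewrite (sum_prodw_prod (fun i b => if P i then G i b else 1)) [RHS]big_mkcond.
apply: eq_bigr => i _; case: (P i) => //.
by under eq_bigr do rewrite mulr1; exact: r_sum1.
Qed.

Lemma sum_prodw : \sum_x prodw x = 1.
Proof.
transitivity (\prod_(i : I) \sum_b r i b * 1); last first.
  by apply: big1 => i _; under eq_bigr do rewrite mulr1; exact: r_sum1.
rewrite -(sum_prodw_prod (fun _ _ => 1)); apply: eq_bigr => x _.
by rewrite big1 ?mulr1.
Qed.

Lemma sum_prodw_coord i (f : B -> R) :
  \sum_x prodw x * f (x i) = \sum_b r i b * f b.
Proof.
rewrite -(@big_pred1_eq _ 1 *%R _ i (fun k => \sum_b r k b * f b)).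
rewrite -sum_prodw_prod_cond.
by apply: eq_bigr => x _; rewrite big_pred1_eq.
Qed.

Lemma sum_prodw_coord2 i j (f g : B -> R) : i != j ->
  \sum_x prodw x * (f (x i) * g (x j)) = (\sum_b r i b * f b) * (\sum_b r j b * g b).
Proof.
move=> neq_ij; pose G k := if k == i then f else g.
have prod2 (F : I -> R) : \prod_(k | pred2 i j k) F k = F i * F j.
  rewrite (bigD1 i) /= ?eqxx //; congr (_ * _); apply: big_pred1 => k /=.
  by case: (eqVneq k i) => [->|]; rewrite ?eqxx ?andbF ?andbT // (negPf neq_ij).
have := sum_prodw_prod_cond (pred2 i j) G.
rewrite prod2 /G eqxx eq_sym (negPf neq_ij) => <-.
by apply: eq_bigr => x _; rewrite prod2 /G eqxx eq_sym (negPf neq_ij).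
Qed.

Lemma sum_prodw_sqr_centered (psi : I -> B -> R) :
  (forall i, \sum_b r i b * psi i b = 0) ->
  \sum_x prodw x * (\sum_i psi i (x i)) ^+ 2 = \sum_i \sum_b r i b * psi i b ^+ 2.
Proof.
move=> psi_centered.
have sqr_sum (x : {ffun I -> B}) :
    (\sum_i psi i (x i)) ^+ 2 = \sum_i \sum_j psi i (x i) * psi j (x j).
  by rewrite expr2 mulr_suml; under eq_bigr do rewrite mulr_sumr.
under eq_bigr do rewrite sqr_sum mulr_sumr.
rewrite exchange_big; apply: eq_bigr => i _.
under eq_bigr do rewrite mulr_sumr.
rewrite exchange_big (bigD1 i) //= [X in _ + X]big1 ?addr0.
  by rewrite -(sum_prodw_coord i (fun b => psi i b ^+ 2)); under [RHS]eq_bigr do rewrite expr2.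
by move=> j neq_ji; rewrite sum_prodw_coord2 1?eq_sym // psi_centered mul0r.
Qed.

Lemma sum_prodw_sqr_ge (phi : I -> B -> R) (a : R) :
  \sum_i \sum_b r i b * (phi i b - \sum_b' r i b' * phi i b') ^+ 2 <=
  \sum_x prodw x * (a - \sum_i phi i (x i)) ^+ 2.
Proof.
pose m i := \sum_b r i b * phi i b.
pose psi i b := phi i b - m i.
have psi_centered i : \sum_b r i b * psi i b = 0.
  rewrite /psi; under eq_bigr do rewrite mulrBr.
  by rewrite sumrB -mulr_suml r_sum1 mul1r subrr.
have mean_psi : \sum_x prodw x * \sum_i psi i (x i) = 0.
  under eq_bigr do rewrite mulr_sumr.
  rewrite exchange_big big1 // => i _.
  by rewrite (sum_prodw_coord i (psi i)) psi_centered.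
pose a' := a - \sum_i m i.
have expand x : prodw x * (a - \sum_i phi i (x i)) ^+ 2 =
    a' ^+ 2 * prodw x - 2 * a' * (prodw x * \sum_i psi i (x i))
    + prodw x * (\sum_i psi i (x i)) ^+ 2.
  have -> : a - \sum_i phi i (x i) = a' - \sum_i psi i (x i) by rewrite /a' /psi sumrB; ring.
  ring.
under [X in _ <= X]eq_bigr do rewrite expand.
rewrite !big_split /= sumrN -!mulr_sumr sum_prodw mean_psi sum_prodw_sqr_centered //.
by rewrite mulr0 subr0 mulr1; apply: ler_wpDl; [exact: sqr_ge0 | exact: lexx].
Qed.

End ProductWeights.

Lemma bool_variance (r phi : bool -> R) : \sum_b r b = 1 ->
  \sum_b r b * (phi b - \sum_b' r b' * phi b') ^+ 2 =
  r true * r false * (phi true - phi false) ^+ 2.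
Proof.
rewrite !big_bool /= => r_sum1.
have -> : r false = 1 - r true by rewrite -r_sum1; ring.
ring.
Qed.

Section ChainRule.
Variables (A : finType) (T : nat) (p : 'I_T -> {ffun 'I_T -> A} -> A -> R).
Hypothesis p_sum1 : forall t x, \sum_a p t x a = 1.
Hypothesis p_causal : forall (t : 'I_T) (x y : {ffun 'I_T -> A}),
  (forall s : 'I_T, (s < t)%N -> x s = y s) -> p t x = p t y.

Definition set_at (x : {ffun 'I_T -> A}) (k : 'I_T) (a : A) : {ffun 'I_T -> A} :=
  [ffun s => if s == k then a else x s].

Lemma set_at_set_at x (k : 'I_T) a b : set_at (set_at x k a) k b = set_at x k b.
Proof. by apply/ffunP => s; rewrite !ffunE; case: eqP. Qed.

Lemma set_at_eq x (k : 'I_T) a : (set_at x k a == x) = (x k == a).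
Proof.
apply/eqP/eqP => [<-|<-]; first by rewrite ffunE eqxx.
by apply/ffunP => s; rewrite ffunE; case: eqP => [->|].
Qed.

Lemma set_at_lt x (k s : 'I_T) a : (s < k)%N -> set_at x k a s = x s.
Proof. by move=> lt_sk; rewrite ffunE ifF // -val_eqE /= ltn_eqF. Qed.

Section AgreeFrom.
Variable x0 : {ffun 'I_T -> A}.

Definition agree_from (k : nat) (x : {ffun 'I_T -> A}) :=
  [forall s : 'I_T, (k <= s)%N ==> (x s == x0 s)].

Lemma agree_fromS (k : 'I_T) x :
  agree_from k x = agree_from k.+1 x && (x k == x0 k).
Proof.
apply/forallP/andP => [h|[/forallP h xk] s].
  split; last exact: (implyP (h k)).
  by apply/forallP => s; apply/implyP => /ltnW; apply/implyP.
apply/implyP; rewrite leq_eqVlt => /orP[/eqP/val_inj <- //|].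
exact/implyP.
Qed.

Lemma agree_fromS_set_at (k : 'I_T) x a :
  agree_from k.+1 (set_at x k a) = agree_from k.+1 x.
Proof.
apply: eq_forallb => s; case: (ltnP k s) => //= lt_ks.
by rewrite ffunE ifF // -val_eqE /= gtn_eqF.
Qed.

Lemma sum_agree_fromS (k : 'I_T) (F : {ffun 'I_T -> A} -> R) :
  \sum_(x | agree_from k.+1 x) F x = \sum_a \sum_(y | agree_from k y) F (set_at y k a).
Proof.
rewrite (partition_big (fun x : {ffun 'I_T -> A} => x k) predT) //=; apply: eq_bigr => a _.
rewrite (reindex_onto (fun y => set_at y k a) (fun x => set_at x k (x0 k)))
  => [|x /andP[_ /eqP <-]].
  apply: eq_bigl => y; rewrite agree_fromS_set_at set_at_set_at set_at_eq.
  by rewrite ffunE !eqxx andbT agree_fromS.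
by rewrite set_at_set_at; apply/eqP; rewrite set_at_eq.
Qed.

Lemma sum_prod_causal_from k : (k <= T)%N ->
  \sum_(x | agree_from k x) \prod_(t : 'I_T | (t < k)%N) p t x (x t) = 1.
Proof.
elim: k => [_|k IHk lt_kT].
  rewrite (big_pred1 x0) => [|x]; first by rewrite big_pred0.
  apply/forallP/eqP => [h|-> s]; last by rewrite eqxx implybT.
  by apply/ffunP => s; apply/eqP/(implyP (h s)).
pose kk := Ordinal lt_kT.
rewrite (sum_agree_fromS kk) -[RHS](IHk (ltnW lt_kT)) exchange_big.
apply: eq_bigr => y _.
have peel a : \prod_(t : 'I_T | (t < k.+1)%N) p t (set_at y kk a) (set_at y kk a t) =
              p kk y a * \prod_(t : 'I_T | (t < k)%N) p t y (y t).
  rewrite (bigD1 kk) //= ffunE eqxx; congr (_ * _).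
    by rewrite (p_causal _ _ y) // => s; apply: set_at_lt.
  rewrite (eq_bigl (fun t : 'I_T => (t < k)%N)) => [|t]; last first.
    by rewrite ltnS -val_eqE /= andbC -ltn_neqAle.
  apply: eq_bigr => t lt_tk; rewrite set_at_lt //.
  rewrite (p_causal _ _ y) // => s lt_st; apply: set_at_lt.
  exact: ltn_trans lt_tk.
by under eq_bigr do rewrite peel; rewrite -mulr_suml p_sum1 mul1r.
Qed.

End AgreeFrom.

(* [a0] only witnesses that [A] is inhabited: otherwise the sum is empty when [T > 0]. *)
Lemma sum_prod_causal (a0 : A) : \sum_x \prod_t p t x (x t) = 1.
Proof.
rewrite -[RHS](@sum_prod_causal_from [ffun => a0] T (leqnn T)); apply: eq_big => [x|x _].
  by symmetry; apply/forallP => s; rewrite leqNgt ltn_ord.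
by apply: eq_bigl => t; rewrite ltn_ord.
Qed.

End ChainRule.

Section DesignNormalization.
Variables (N T : nat) (d : design N T) (Y : tmat N T -> omat N T).
Hypothesis d_valid : valid_design d.
Hypothesis Y_cellwise : forall (W W' : tmat N T) c, W c = W' c -> Y W c = Y W' c.

Definition unrows (X : {ffun 'I_T -> {ffun 'I_N -> bool}}) : tmat N T :=
  [ffun c => X c.2 c.1].

Lemma unrows_bij : bijective unrows.
Proof.
exists (fun W => [ffun t => row_at W t]) => [X|W]; apply/ffunP.
  by move=> t; apply/ffunP => i; rewrite !ffunE.
by case=> i t; rewrite !ffunE.
Qed.

Lemma row_at_unrows X t : row_at (unrows X) t = X t.
Proof. by apply/ffunP => i; rewrite !ffunE. Qed.

Lemma sum_prod_dprob :
  \sum_(W : tmat N T) \prod_t dprob d t W (Y W) (row_at W t) = 1.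
Proof.
rewrite (reindex unrows); last exact/onW_bij/unrows_bij.
under eq_bigr do under eq_bigr do rewrite row_at_unrows.
apply: (@sum_prod_causal _ T (fun t X => dprob d t (unrows X) (Y (unrows X))))
  => [t X|t X X' eqX|]; last exact: [ffun => false].
  exact: (d_valid.1 t _ _).2.
apply: d_valid.2 => i s lt_st.
have eq_is : unrows X (i, s) = unrows X' (i, s) by rewrite !ffunE /= eqX.
by split; last exact: Y_cellwise.
Qed.

End DesignNormalization.

(* [%R] is needed: under the ascription [: R] Stdlib binds [R_scope], where [/] is [Rdiv]. *)
Definition q (b s : bool) : R := (if s == b then 3 / 4 else 1 / 4)%R.

Lemma q_ge0 b s : 0 <= q b s.
Proof. by rewrite /q; case: ifP => _; lra. Qed.

Lemma q_sum1 b : \sum_s q b s = 1.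
Proof. by rewrite big_bool /q; case: b => /=; lra. Qed.

Lemma q_sum1_param s : \sum_b q b s = 1.
Proof. by rewrite big_bool /q; case: s => /=; lra. Qed.

Section HardInstance.
Variables N T : nat.

Section FixedParameters.
Variable th : {ffun cell N T -> bool}.

Definition param (i : 'I_N) (k : nat) : bool :=
  if insub k is Some t then th (i, t) else false.

Lemma paramE i (t : 'I_T) : param i t = th (i, t).
Proof. by rewrite /param valK. Qed.

(* The kernel of round [t] draws the state of round [t.+1]. *)
Definition hard_inst : instance N T :=
  @Instance N T bool
    (fun i => q (param i 0))
    (fun i t _ _ => q (param i t.+1))
    (fun _ _ s w => (s == w)%:R)
    unit
    (fun _ _ _ _ _ => 1)
    (fun _ _ _ _ _ => 0).

Lemma hard_inst_ok sigma tmix : 0 <= sigma -> model_ok sigma tmix hard_inst.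
Proof.
move=> sigma_ge0.
have q_distr b : is_distr (q b) by split; [exact: q_ge0 | exact: q_sum1].
split; first by move=> i; exact: q_distr.
split; first by move=> i t w s; exact: q_distr.
split; first by move=> i t s w /=; case: (s == w); rewrite ?ler01 ?lexx.
split.
  by move=> i t s w; split=> [a|] /=; rewrite ?ler01 // big_const card_unit /= addr0.
split; first by move=> i t s w; rewrite big1 // => e _; rewrite mulr0.
split; first by move=> i t s w; rewrite big1 ?sqr_ge0 // => e _; rewrite expr0n mulr0.
move=> i t w f g [_ f_sum1] [_ g_sum1].
have push_const h : \sum_s h s = 1 -> push (kern hard_inst i t w) h =1 q (param i t.+1).
  by move=> h_sum1 s; rewrite /push /= -mulr_suml h_sum1 mul1r.
have -> : dTV (push (kern hard_inst i t w) f) (push (kern hard_inst i t w) g) = 0.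
  (* [dTV] is written under [R_scope], so its outer product is [Rmult]. *)
  by rewrite /dTV big1 ?Rmult_0_r // => s _; rewrite !push_const // subrr normr0.
apply: mulr_ge0; first exact/RleP/Rlt_le/exp_pos.
by apply: mulr_ge0; [lra | apply: sumr_ge0].
Qed.

Definition obs (W : tmat N T) (S : {ffun cell N T -> bool}) : omat N T :=
  fun c => (S c == W c)%:R.

Definition design_prob (d : design N T) W S : R :=
  \prod_t dprob d t W (obs W S) (row_at W t).

Definition state_prob (S : {ffun cell N T -> bool}) : R := \prod_c q (th c) (S c).

Lemma outcome_hard W S E : outcome hard_inst W S E = obs W S.
Proof. by apply: functional_extensionality => c; rewrite /outcome /= addr0. Qed.

Lemma cell_law_hard i (t : 'I_T) s :
  (if val t is 0 then q (param i 0) s else q (param i (prev_round t).+1) s) =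
  q (th (i, t)) s.
Proof.
rewrite -paramE; case: t => [[|k] lt_kT] //=.
by rewrite /prev_round val_insubd /= (ltnW lt_kT).
Qed.

Lemma traj_prob_hard d W S E :
  traj_prob hard_inst d W S E = design_prob d W S * state_prob S.
Proof.
rewrite /traj_prob big_split /= outcome_hard; congr (_ * _).
under eq_bigr do under eq_bigr do rewrite cell_law_hard mulr1.
by rewrite exchange_big pair_big /=; apply: eq_bigr => -[i t].
Qed.

Lemma expect_hard d F : expect hard_inst d F =
  \sum_W \sum_S design_prob d W S * state_prob S * F W (obs W S).
Proof.
apply: eq_bigr => W _; apply: eq_bigr => S _.
rewrite (big_pred1 [ffun => tt]) ?traj_prob_hard ?outcome_hard // => E /=.
by symmetry; apply/eqP/ffunP => c; rewrite ffunE; case: (E c).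
Qed.

Lemma design_prob_const w W S :
  design_prob (const_design w) W S = (W == [ffun => w])%:R.
Proof.
rewrite /design_prob /=; have [->|neq_W] := eqVneq W [ffun => w].
  by rewrite big1 // => t _; rewrite ifT //; apply/eqP/ffunP => i; rewrite !ffunE.
have /existsP[[i t] neq_it] : [exists c, W c != w].
  apply: contraNT neq_W => /existsPn W_const; apply/eqP/ffunP => c.
  by rewrite ffunE; apply/eqP/negPn/W_const.
rewrite (bigD1 t) //= ifF ?mul0r //; apply: contraNF neq_it => /eqP/ffunP/(_ i).
by rewrite !ffunE => ->.
Qed.

Lemma expect_const_outcome w c :
  expect hard_inst (const_design w) (fun _ Y => Y c) = q (th c) w.
Proof.
rewrite expect_hard (bigD1 [ffun => w]) //= [X in _ + X]big1 ?addr0 => [|W neq_W];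
  last first.
  by apply: big1 => S _; rewrite design_prob_const (negPf neq_W) !mul0r.
under eq_bigr do rewrite design_prob_const eqxx mul1r /obs ffunE.
rewrite (@sum_prodw_coord _ _ (fun c => q (th c)) (fun c => q_sum1 (th c)) c
          (fun s => (s == w)%:R)).
by rewrite big_bool; case: w; rewrite /= ?mulr1 ?mulr0 ?addr0 ?add0r.
Qed.

Lemma gate_hard :
  gate hard_inst = (N%:R * T%:R)^-1 * \sum_c (q (th c) true - q (th c) false).
Proof. by congr (_ * _); apply: eq_bigr => c _; rewrite !expect_const_outcome. Qed.

End FixedParameters.

Variables (d : design N T) (est : estimator N T).
Hypothesis d_valid : valid_design d.

Let n : R := (N%:R * T%:R)%R.

Lemma posterior_risk_ge S a :
  3 / 16 / n <= \sum_th state_prob th S * (a - gate (hard_inst th)) ^+ 2.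
Proof.
pose r c b := q b (S c).
have r_sum1 c : \sum_b r c b = 1 by exact: q_sum1_param.
pose phi (c : cell N T) b := n^-1 * (q b true - q b false).
have -> : \sum_th state_prob th S * (a - gate (hard_inst th)) ^+ 2 =
          \sum_th @prodw _ _ r th * (a - \sum_c phi c (th c)) ^+ 2.
  by apply: eq_bigr => th _; rewrite gate_hard mulr_sumr.
have <- : \sum_c \sum_b r c b * (phi c b - \sum_b' r c b' * phi c b') ^+ 2 = 3 / 16 / n.
  under eq_bigr => c _ do rewrite (bool_variance _ (phi c) (r_sum1 c)).
  rewrite (eq_bigr (fun _ => 3 / 16 * n^-1 ^+ 2)) => [|c _]; last first.
    (* Naming [n^-1] keeps [field] from requiring [n != 0]. *)
    by rewrite /r /phi /q; set m := n^-1; case: (S c) => /=; field.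
  rewrite sumr_const card_prod !card_ord -[_ *+ (N * T)]mulr_natr natrM -/n.
  have [->|n_neq0] := eqVneq n 0; first by rewrite invr0 expr0n /= !mulr0.
  by field.
exact: sum_prodw_sqr_ge.
Qed.

Lemma design_prob_ge0 W S : 0 <= design_prob d W S.
Proof. by apply: prodr_ge0 => t _; exact: (d_valid.1 t W _).1. Qed.

Lemma sum_design_prob S : \sum_W design_prob d W S = 1.
Proof.
by apply: (@sum_prod_dprob N T d (obs^~ S) d_valid) => W W' c eq_c; rewrite /obs eq_c.
Qed.

Lemma sum_MSE_hard_ge :
  \sum_(th : {ffun cell N T -> bool}) 3 / 16 / n <= \sum_th MSE (hard_inst th) d est.
Proof.
apply: (@le_trans _ _ (\sum_W \sum_S design_prob d W S * (3 / 16 / n))).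
  rewrite exchange_big /=.
  by under [X in _ <= X]eq_bigr do rewrite -mulr_suml sum_design_prob mul1r.
rewrite /MSE; under [X in _ <= X]eq_bigr do rewrite expect_hard.
rewrite [X in _ <= X]exchange_big; apply: ler_sum => W _.
rewrite [X in _ <= X]exchange_big; apply: ler_sum => S _.
under [X in _ <= X]eq_bigr do rewrite -mulrA.
by rewrite -mulr_sumr ler_wpM2l ?design_prob_ge0 ?posterior_risk_ge.
Qed.

End HardInstance.

Lemma sum_le_exists_le (X : finType) (x0 : X) (f g : X -> R) :
  \sum_x g x <= \sum_x f x -> exists x, g x <= f x.
Proof.
move=> le_sum; case: (boolP [exists x, g x <= f x]) => [/existsP//|/existsPn lt_fg].
have has_x0 : has predT (index_enum X) by apply/hasP; exists x0; rewrite ?mem_index_enum.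
suff : \sum_x f x < \sum_x g x by rewrite ltNge le_sum.
by apply: ltr_sum => // x _; rewrite ltNge; exact: lt_fg.
Qed.

Theorem mainTheorem7 :
  exists c : R, 0 < c /\
  forall (N T : nat), (1 <= N)%N -> (1 <= T)%N ->
  forall (sigma tmix : R), 0 <= sigma -> 0 < tmix ->
  forall (d : design N T) (est : estimator N T), valid_design d ->
  exists I : instance N T,
    model_ok sigma tmix I /\ c / (N%:R * T%:R) <= MSE I d est.
Proof.
exists (3 / 16); split; first lra.
move=> N T _ _ sigma tmix sigma_ge0 _ d est d_valid.
have [th MSE_ge] :=
  @sum_le_exists_le _ [ffun => false] _ _ (@sum_MSE_hard_ge N T d est d_valid).
by exists (hard_inst _ _ th); split; [exact: hard_inst_ok | exact: MSE_ge].
Qed.
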